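(* Let $p$ be an odd prime. If $M$ is a finite $A$-module (finite as a set), then $\Phi_nM=0$ for some $n$.
   Context: $A$ is the ring of degree zero stable operations in $p$-local complex $K$-theory. Fix $q$ primitive mod $p^2$, $\Psi^q\in A$ the Adams operation, $q_i=q^{(-1)^i\lfloor i/2\rfloor}$, $\Theta_n(X)=\prod_{i=1}^n(X-q_i)\in\mathbb{Z}_{(p)}[X]$, and $\Phi_n=\Theta_n(\Psi^q)\in A$. *)

From HB Require Import structures.
From mathcomp Require Import all_boot all_order all_algebra.
Set Implicit Arguments. Unset Strict Implicit. Unset Printing Implicit Defensive.
Import Order.TTheory GRing.Theory Num.Theory.
Local Open Scope ring_scope.

Definition zp_int (p : nat) (x : rat) : bool := ~~ (p %| `|denq x|)%N.

Definition primitive_mod (m q : nat) : bool :=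
  coprime q m &&
  [forall k : 'I_(totient m), (0 < k)%N ==> (q ^ k %% m != 1)%N].

(* q_i = q^((-1)^i * floor(i/2)) *)
Definition qi (q : nat) (i : nat) : rat :=
  if odd i then (q%:R : rat) ^- i./2 else (q%:R : rat) ^+ i./2.

Definition Theta (q n : nat) : {poly rat} :=
  \prod_(1 <= i < n.+1) ('X - (qi q i)%:P).

(* Model of A: A = lim_n Z_(p)[X]/(Theta_n(X)), with Psi^q |-> X.
   An element is a compatible family (f n)_n of Z_(p)-polynomials of degree
   < n, f n representing the image in Z_(p)[X]/(Theta_n). *)
Definition isA (p q : nat) (f : nat -> {poly rat}) : Prop :=
  forall n, all (zp_int p) (f n) /\ (size (f n) <= n)%N /\
            f n.+1 %% Theta q n = f n.

Definition Aadd (f g : nat -> {poly rat}) : nat -> {poly rat} :=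
  fun n => f n + g n.
Definition Amul (q : nat) (f g : nat -> {poly rat}) : nat -> {poly rat} :=
  fun n => (f n * g n) %% Theta q n.
(* image in A of a polynomial P in Psi^q, i.e. P(Psi^q) *)
Definition Aeval (q : nat) (P : {poly rat}) : nat -> {poly rat} :=
  fun n => P %% Theta q n.
Definition Aone (q : nat) := Aeval q 1.
Definition Psi (q : nat) := Aeval q 'X.
Definition Phi (q n : nat) := Aeval q (Theta q n).

Definition isAmodule (p q : nat) (M : zmodType)
  (act : (nat -> {poly rat}) -> M -> M) : Prop :=
  [/\ forall a, isA p q a -> forall m m', act a (m + m') = act a m + act a m',
      forall a b, isA p q a -> isA p q b -> forall m,
        act (Aadd a b) m = act a m + act b m,
      forall a b, isA p q a -> isA p q b -> forall m,
        act (Amul q a b) m = act a (act b m)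
    & forall m, act (Aone q) m = m].

(* Let K = #|M|, so that K kills M, and choose L with K | q^L - 1 in Z_(p).
   Shifting the index i by 2L preserves its parity and multiplies q_i by
   q^(+-L), so the shifted factors of Theta_(s+c) = Theta_s * prod (X - q_(s+i))
   are congruent mod K to those of Theta_c whenever 2L | s.  Hence
   Phi_(2Lj) acts on M as the j-th power of Phi_(2L), and as M is finite some
   e = Phi_(2Lk) acts as an idempotent.  The series S = sum_j Phi_(2Lkj)
   converges in A and satisfies e S + 1 = S on M, so (1 - e) is onto while
   e (1 - e) = 0: e acts as 0. *)

From HB Require Import structures.
From mathcomp Require Import all_boot all_order all_algebra.
From mathcomp Require fingroup cyclic.
From mathcomp Require Import ring zify.
From Stdlib Require Import FunctionalExtensionality.
Import GRing.Theory Num.Theory.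

Set Implicit Arguments.
Unset Strict Implicit.
Unset Printing Implicit Defensive.

Local Open Scope ring_scope.

(* Unlike [zp_int p], this is a subring of [rat] for every [p]. *)
Definition pintegral (p : nat) : {pred rat} := fun x => coprime `|denq x| p.

Lemma denq_frac_dvd (a b : int) : (`|denq (a%:~R / b%:~R)| %| `|b|)%N.
Proof.
rewrite -[_ / _]/((a, b).1%:Q / (a, b).2%:Q) -fracqE den_fracq /=.
by case: eqP => _; rewrite ?dvd1n //= dvdn_div ?dvdn_gcdr.
Qed.

Lemma pintegral_frac p (a b : int) :
  coprime `|b| p -> a%:~R / b%:~R \in pintegral p.
Proof. exact/coprime_dvdl/denq_frac_dvd. Qed.

Lemma pintegral_subring p : subring_closed (pintegral p).
Proof.
have numden x : x = (numq x)%:~R / (denq x)%:~R by rewrite divq_num_den.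
have cden x y : x \in pintegral p -> y \in pintegral p ->
    coprime `|denq x * denq y| p.
  by move=> px py; rewrite abszM coprimeMl; apply/andP.
split; first by rewrite unfold_in /pintegral /= coprime1n.
- move=> x y px py; rewrite (numden x) (numden y).
  have -> : (numq x)%:~R / (denq x)%:~R - (numq y)%:~R / (denq y)%:~R
      = (numq x * denq y - numq y * denq x)%:~R / (denq x * denq y)%:~R :> rat.
    by rewrite !rmorphB !rmorphM /=; field; rewrite !intr_eq0 !denq_neq0.
  exact/pintegral_frac/cden.
- move=> x y px py; rewrite (numden x) (numden y) mulrACA -invfM -!rmorphM.
  exact/pintegral_frac/cden.
Qed.

HB.instance Definition _ (p : nat) :=
  GRing.isSubringClosed.Build rat (pintegral p) (pintegral_subring p).

Lemma pintegralE p x : prime p -> (x \in pintegral p) = zp_int p x.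
Proof.
by move=> p_pr; rewrite unfold_in /pintegral /zp_int /= coprime_sym prime_coprime.
Qed.

Lemma pintegral_natV p (n : nat) : coprime n p -> n%:R^-1 \in pintegral p.
Proof. by move=> np; have := @pintegral_frac p 1 n np; rewrite mul1r. Qed.

Lemma modp_congr (F : fieldType) (d x y : {poly F}) :
  d %| x - y -> x %% d = y %% d.
Proof. by move=> dvd; rewrite -(subrK y x) modpD (modp_eq0 dvd) add0r. Qed.

Lemma modp_modp (F : fieldType) (d e x : {poly F}) :
  d %| e -> (x %% e) %% d = x %% d.
Proof.
by move=> de; rewrite {2}(divp_eq x e) modpD (modp_eq0 (dvdp_mull _ de)) add0r.
Qed.

Lemma modp_polyOver_monic (F : fieldType) (S : subringClosed F) (d P : {poly F}) :
  d \is monic -> d \is a polyOver S -> P \is a polyOver S ->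
  P %% d \is a polyOver S.
Proof.
move=> md dS; have [n ltPn] := ubnP (size P); elim: n => // n IH in P ltPn *.
move=> PS; have [ltPd|leDP] := ltnP (size P) (size d); first by rewrite modp_small.
set k := (size P - size d)%N.
set Q := P - lead_coef P *: ('X^k * d).
have QS : Q \is a polyOver S.
  by rewrite rpredB ?polyOverZ ?rpredM ?polyOverXn //; apply/polyOverP.
have d0 : size d != 0%N by rewrite size_poly_eq0 monic_neq0.
have leQP : (size Q <= (size P).-1)%N.
  apply/leq_sizeP => j lej; rewrite coefB coefZ coefXnM.
  have [->|ltj] := eqVneq j (size P).-1.
    rewrite ifN; last by rewrite -leqNgt /k; lia.
    have -> : ((size P).-1 - k = (size d).-1)%N by rewrite /k; lia.
    by move/monicP: md; rewrite /lead_coef => ->; rewrite mulr1 subrr.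
  have lePj : (size P <= j)%N.
    by apply: leq_trans (leqSpred _) _; rewrite ltn_neqAle eq_sym ltj.
  rewrite nth_default //; case: ifP => _; rewrite ?mulr0 ?subr0 //.
  rewrite nth_default ?mulr0 ?subr0 // /k.
  (* the [size]s below carry different ring instances, which [lia] would treat
     as distinct atoms; [set] merges them *)
  by move: lePj leDP; set sP := size P; set sd := size d; lia.
have -> : P %% d = Q %% d.
  by rewrite /Q modpD modpN modpZl modp_mull scaler0 subr0.
by apply: IH => //; lia.
Qed.

Definition Theta_shift (q s c : nat) : {poly rat} :=
  \prod_(1 <= i < c.+1) ('X - (qi q (i + s))%:P).

Definition Theta_defect (q K c s : nat) : {poly rat} :=
  K%:R^-1 *: (Theta q c - Theta_shift q s c).

Definition Theta_series (q c n : nat) : {poly rat} :=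
  \sum_(j < n.+1) Theta q (c * j).

Definition Theta_defect_series (q K c n : nat) : {poly rat} :=
  \sum_(j < n.+1) Theta q (c * j) * Theta_defect q K c (c * j).

Lemma mulr_sum_shift (R : comRingType) (a : R) (F G : nat -> R) n :
  (forall j, a * F j = F j.+1 + G j) ->
  a * \sum_(j < n) F j + F 0%N = \sum_(j < n) F j + \sum_(j < n) G j + F n.
Proof.
move=> aF; elim: n => [|n IHn]; first by rewrite !big_ord0 mulr0 !add0r.
rewrite !big_ord_recr /= mulrDr aF addrAC IHn; ring.
Qed.

Section Theta.
Variable q : nat.

Lemma Theta_monic n : Theta q n \is monic.
Proof. exact: monic_prod_XsubC. Qed.

Lemma size_Theta n : size (Theta q n) = n.+1.
Proof.
rewrite /Theta -(big_map (qi q) xpredT (fun x => 'X - x%:P)) size_prod_XsubC.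
by rewrite size_map size_iota subn1.
Qed.

Lemma Theta0 : Theta q 0 = 1.
Proof. by rewrite /Theta big_geq. Qed.

Lemma ThetaD s c : Theta q (s + c) = Theta q s * Theta_shift q s c.
Proof.
rewrite /Theta (big_cat_nat _ (n := s.+1)) //= ?ltnS ?leq_addr //.
congr (_ * _); rewrite /Theta_shift -{1}(add1n s) big_addn.
by congr (\prod_(1 <= i < _) _); lia.
Qed.

Lemma Theta_dvd m n : (m <= n)%N -> Theta q m %| Theta q n.
Proof. by move=> lemn; rewrite -(subnKC lemn) ThetaD dvdp_mulr. Qed.

Lemma Theta_mul_defect K c s : K != 0%N ->
  Theta q c * Theta q s = Theta q (s + c) + (Theta q s * Theta_defect q K c s) *+ K.
Proof.
move=> K_neq0; rewrite ThetaD -mulrnAr -scaler_nat scalerA.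
by rewrite mulfV ?pnatr_eq0 // scale1r; ring.
Qed.

Lemma Theta_series_mul K c n : K != 0%N ->
  Theta q c * Theta_series q c n + 1 - Theta_series q c n
    - Theta_defect_series q K c n *+ K = Theta q (c * n.+1).
Proof.
move=> K_neq0; pose G j := Theta q (c * j) * Theta_defect q K c (c * j) *+ K.
have shift j : Theta q c * Theta q (c * j) = Theta q (c * j.+1) + G j.
  by rewrite (Theta_mul_defect _ _ K_neq0) mulnS addnC.
have := mulr_sum_shift n.+1 shift; rewrite muln0 Theta0.
by rewrite /Theta_series /Theta_defect_series -sumrMnl => ->; ring.
Qed.

Lemma qi_pintegral p i : coprime q p -> qi q i \in pintegral p.
Proof.
move=> qp; rewrite /qi; case: ifP => _; last by rewrite rpredX ?rpred_nat.
by rewrite -exprVn rpredX ?pintegral_natV.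
Qed.

Lemma Theta_polyOver p n : coprime q p -> Theta q n \is a polyOver (pintegral p).
Proof.
by move=> qp; rewrite rpred_prod // => i _; rewrite polyOverXsubC qi_pintegral.
Qed.

End Theta.

Lemma prime_coprime_gt0 p q : prime p -> coprime q p -> (0 < q)%N.
Proof.
by move=> p_pr; case: q => //; rewrite /coprime gcd0n => /eqP p1; rewrite p1 in p_pr.
Qed.

Lemma pintegral_dvd_expn_sub1 (p q K : nat) :
  prime p -> coprime q p -> (0 < K)%N ->
  exists2 L, (0 < L)%N & forall w, ((q ^ (L * w))%:R - 1) / K%:R \in pintegral p.
Proof.
move=> p_pr qp K_gt0; have q_gt0 := prime_coprime_gt0 p_pr qp.
have [r rp ->] := pfactor_coprime p_pr K_gt0; set e := logn p K.
exists (totient (p ^ e)); first by rewrite totient_gt0 expn_gt0 prime_gt0.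
move=> w; have : (p ^ e %| q ^ (totient (p ^ e) * w) - 1)%N.
  rewrite -eqn_mod_dvd ?expn_gt0 ?q_gt0 // expnM -modnXm.
  by rewrite cyclic.Euler_exp_totient ?coprimeXr // modnXm exp1n.
case/dvdnP=> t tE; rewrite -[1]/(1%:R) -natrB ?expn_gt0 ?q_gt0 // tE.
have pe_neq0 : (p ^ e)%:R != 0 :> rat by rewrite pnatr_eq0 -lt0n expn_gt0 prime_gt0.
rewrite !natrM invfM mulrACA divff // mulr1.
by have := @pintegral_frac p t r; rewrite coprime_sym => /(_ rp).
Qed.

Section ShiftCongruence.
Variables (p q K L : nat).
Hypotheses (p_pr : prime p) (qp : coprime q p).
Hypothesis L_congr : forall w, ((q ^ (L * w))%:R - 1) / K%:R \in pintegral p.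

Lemma qi_shift_congr i w : (qi q (i + 2 * L * w) - qi q i) / K%:R \in pintegral p.
Proof.
have oddE : odd (i + 2 * L * w) = odd i.
  by rewrite oddD -mulnA mul2n odd_double addbF.
have halfE : (i + 2 * L * w)./2 = (i./2 + L * w)%N.
  by rewrite -mulnA mul2n halfD odd_double andbF add0n doubleK.
have q_neq0 : q%:R != 0 :> rat by rewrite pnatr_eq0 -lt0n (prime_coprime_gt0 p_pr qp).
have qVp : q%:R^-1 \in pintegral p by apply: pintegral_natV.
have := L_congr w; rewrite natrX /qi oddE halfE exprD => Lw; case: (odd i).
  have -> : (q%:R ^+ i./2 * q%:R ^+ (L * w))^-1 - (q%:R ^+ i./2)^-1
      = - (q%:R ^+ i./2 * q%:R ^+ (L * w))^-1 * (q%:R ^+ (L * w) - 1) :> rat.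
    by field; rewrite !expf_neq0.
  by rewrite -mulrA rpredM ?rpredN // invfM -!exprVn rpredM ?rpredX.
have -> : q%:R ^+ i./2 * q%:R ^+ (L * w) - q%:R ^+ i./2
    = q%:R ^+ i./2 * (q%:R ^+ (L * w) - 1) :> rat by ring.
by rewrite -mulrA rpredM ?rpredX ?rpred_nat.
Qed.

Lemma Theta_defect_polyOver c w :
  Theta_defect q K c (2 * L * w) \is a polyOver (pintegral p).
Proof.
rewrite /Theta_defect /Theta_shift /Theta; elim: c => [|c IHc].
  by rewrite !big_geq // subrr scaler0 rpred0.
rewrite big_nat_recr // [X in _ - X]big_nat_recr //=.
set T := \prod_(1 <= i < c.+1) _ in IHc *.
set T' := \prod_(1 <= i < c.+1) _ in IHc *.
set a := qi q c.+1; set b := qi q (c.+1 + 2 * L * w).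
have -> : K%:R^-1 *: (T * ('X - a%:P) - T' * ('X - b%:P))
    = (K%:R^-1 *: (T - T')) * ('X - a%:P) + T' * ((b - a) / K%:R)%:P.
  by rewrite -!mul_polyC polyCM polyCB; ring.
rewrite rpredD ?rpredM ?polyOverC ?qi_shift_congr //.
- by rewrite polyOverXsubC qi_pintegral.
- by rewrite rpred_prod // => i _; rewrite polyOverXsubC qi_pintegral.
Qed.

End ShiftCongruence.

(* A family [G] of p-integral polynomials that is compatible mod the [Theta q n]
   determines the element [Alim q G] of [A]; this is how the infinite sum
   [Theta_series] becomes an element of [A]. *)
Definition Alim (q : nat) (G : nat -> {poly rat}) : nat -> {poly rat} :=
  fun n => G n %% Theta q n.

Definition compatible (p q : nat) (G : nat -> {poly rat}) : Prop :=
  (forall n, G n \is a polyOver (pintegral p)) /\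
  (forall n, Theta q n %| G n.+1 - G n).

Lemma PhiE q n : Phi q n = Alim q (fun=> Theta q n).
Proof. by []. Qed.

Section CompatibleFamilies.
Variables p q : nat.
Hypotheses (p_pr : prime p) (qp : coprime q p).

Lemma isA_Alim G : compatible p q G -> isA p q (Alim q G).
Proof.
move=> [GS Gdvd] n; split; [|split].
- have : G n %% Theta q n \is a polyOver (pintegral p).
    by rewrite modp_polyOver_monic ?Theta_monic ?Theta_polyOver.
  by move/polyOverP=> Gn; apply/(all_nthP 0) => i _; rewrite -pintegralE.
- by rewrite -ltnS -(size_Theta q n) ltn_modp monic_neq0 ?Theta_monic.
- by rewrite /Alim modp_modp ?Theta_dvd //; apply: modp_congr.
Qed.

Lemma Alim_congr G G' : (forall n, Theta q n %| G n - G' n) -> Alim q G = Alim q G'.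
Proof. by move=> dvd; apply: functional_extensionality => n; apply: modp_congr. Qed.

Lemma Aadd_Alim G G' : Aadd (Alim q G) (Alim q G') = Alim q (fun n => G n + G' n).
Proof. by apply: functional_extensionality => n; rewrite /Aadd /Alim modpD. Qed.

Lemma Amul_Alim G G' : Amul q (Alim q G) (Alim q G') = Alim q (fun n => G n * G' n).
Proof.
apply: functional_extensionality => n.
by rewrite /Amul /Alim modp_mul mulrC modp_mul mulrC.
Qed.

Lemma compatible_const P : P \is a polyOver (pintegral p) -> compatible p q (fun=> P).
Proof. by split=> // n; rewrite subrr dvdp0. Qed.

Lemma compatible_Theta n : compatible p q (fun=> Theta q n).
Proof. exact/compatible_const/Theta_polyOver. Qed.

Lemma compatibleD G G' : compatible p q G -> compatible p q G' ->
  compatible p q (fun n => G n + G' n).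
Proof.
move=> [GS Gdvd] [G'S G'dvd]; split=> n; first by rewrite rpredD.
by rewrite opprD addrACA dvdp_add.
Qed.

Lemma compatibleM G G' : compatible p q G -> compatible p q G' ->
  compatible p q (fun n => G n * G' n).
Proof.
move=> [GS Gdvd] [G'S G'dvd]; split=> n; first by rewrite rpredM.
have -> : G n.+1 * G' n.+1 - G n * G' n =
    (G n.+1 - G n) * G' n.+1 + G n * (G' n.+1 - G' n) by ring.
by apply: dvdp_add; [apply: dvdp_mulr | apply: dvdp_mull].
Qed.

Lemma compatibleMn G k : compatible p q G -> compatible p q (fun n => G n *+ k).
Proof.
move=> [GS Gdvd]; split=> n; first by rewrite rpredMn.
by rewrite -mulrnBl -mulr_natr dvdp_mulr.
Qed.

Lemma compatible_sum (F : nat -> {poly rat}) :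
  (forall j, F j \is a polyOver (pintegral p)) ->
  (forall n, Theta q n %| F n.+1) ->
  compatible p q (fun n => \sum_(j < n.+1) F j).
Proof.
move=> FS dvd; split=> n; first by apply: rpred_sum => j _.
by rewrite big_ord_recr /= addrAC subrr add0r.
Qed.

End CompatibleFamilies.

Lemma mulrn_card (M : finZmodType) (m : M) : m *+ #|M| = 0.
Proof.
have := @cyclic.expg_cardG _ (fingroup.setT_group _) m (in_setT m).
by rewrite cardsT FinRing.zmodXgE.
Qed.

Section FiniteIteration.
Variables (T : finType) (f : T -> T).

Lemma iter_eventually_periodic :
  exists a d, (0 < d)%N /\ forall x, iter (a + d) f x = iter a f x.
Proof.
pose g (i : 'I_#|{ffun T -> T}|.+1) := [ffun x => iter i f x].
have /injectivePn[i [j neq_ij gij]] : ~~ injectiveb g.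
  by apply/injectiveP => /leq_card; rewrite card_ord ltnn.
have gE x : iter i f x = iter j f x.
  by have := congr1 (fun h : {ffun T -> T} => h x) gij; rewrite !ffunE.
case: (ltngtP i j) => [lt_ij|lt_ji|/val_inj eq_ij].
- by exists i, (j - i)%N; split=> [|x]; rewrite ?subn_gt0 // subnKC ?gE // ltnW.
- by exists j, (i - j)%N; split=> [|x]; rewrite ?subn_gt0 // subnKC ?gE // ltnW.
- by rewrite eq_ij eqxx in neq_ij.
Qed.

Lemma exists_idempotent_iter :
  exists2 k, (0 < k)%N & forall x, iter k f (iter k f x) = iter k f x.
Proof.
have [a [d [d_gt0 per]]] := iter_eventually_periodic.
have perM n m x : (a <= n)%N -> iter (n + d * m) f x = iter n f x.
  move=> le_an; rewrite -(subnK le_an) -addnA !iterD; congr iter.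
  elim: m => [|m IHm]; first by rewrite muln0.
  by rewrite mulnS iterD -iterD per.
exists (d * a.+1)%N => [|x]; first by rewrite muln_gt0 d_gt0.
by rewrite -iterD perM // ltnW // leq_pmull.
Qed.

End FiniteIteration.

(* [e (s x) + x = s x] says that [(1 - e) s = 1], while [e (1 - e) = 0]. *)
Lemma idempotent_eq0 (V : zmodType) (e s : V -> V) :
  {morph e : x y / x + y} -> (forall x, e (e x) = e x) ->
  (forall x, e (s x) + x = s x) -> forall x, e x = 0.
Proof.
move=> eD e_idem es x; apply: (@addrI _ (e (s x))).
by rewrite addr0 -[in RHS](es x) eD e_idem.
Qed.

Section FiniteModule.
Variables (p q : nat) (M : finZmodType) (act : (nat -> {poly rat}) -> M -> M).
Hypotheses (p_pr : prime p) (qp : coprime q p) (actM : isAmodule p q act).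

Let isA_Alim := isA_Alim p_pr qp.

Lemma act_add G G' m : compatible p q G -> compatible p q G' ->
  act (Alim q (fun n => G n + G' n)) m = act (Alim q G) m + act (Alim q G') m.
Proof.
move=> cG cG'; case: actM => _ actD _ _.
by rewrite -Aadd_Alim actD //; apply: isA_Alim.
Qed.

Lemma act_mul G G' m : compatible p q G -> compatible p q G' ->
  act (Alim q (fun n => G n * G' n)) m = act (Alim q G) (act (Alim q G') m).
Proof.
move=> cG cG'; case: actM => _ _ actMul _.
by rewrite -Amul_Alim actMul //; apply: isA_Alim.
Qed.

Lemma act_one m : act (Alim q (fun=> 1)) m = m.
Proof. by case: actM => _ _ _; apply. Qed.

Lemma act_Phi_add n m m' :
  act (Phi q n) (m + m') = act (Phi q n) m + act (Phi q n) m'.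
Proof.
by case: actM => actD _ _ _; rewrite actD //; apply/isA_Alim/compatible_Theta.
Qed.

Lemma act_zero m : act (Alim q (fun=> 0)) m = 0.
Proof.
have c0 : compatible p q (fun=> 0) by apply/compatible_const/rpred0.
have := act_add m c0 c0.
have -> : Alim q (fun=> 0 + 0) = Alim q (fun=> 0).
  by apply: Alim_congr => n; rewrite addr0 subrr dvdp0.
by rewrite -[LHS]addr0 => /addrI <-.
Qed.

Lemma act_natmul G k m : compatible p q G ->
  act (Alim q (fun n => G n *+ k)) m = act (Alim q G) m *+ k.
Proof.
move=> cG; elim: k => [|k IHk]; first by rewrite mulr0n -(act_zero m).
have -> : Alim q (fun n => G n *+ k.+1) = Alim q (fun n => G n + G n *+ k).
  by apply: Alim_congr => n; rewrite mulrS subrr dvdp0.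
rewrite act_add //; last exact: compatibleMn.
by rewrite mulrS -IHk.
Qed.

Lemma act_congr G G' D :
  compatible p q G -> compatible p q G' -> compatible p q D ->
  (forall n, Theta q n %| G n - G' n - D n *+ #|M|) ->
  forall m, act (Alim q G) m = act (Alim q G') m.
Proof.
move=> cG cG' cD dvd m.
have -> : Alim q G = Alim q (fun n => G' n + D n *+ #|M|).
  by apply: Alim_congr => n; rewrite opprD addrA.
rewrite act_add //; last exact: compatibleMn.
by rewrite act_natmul // mulrn_card addr0.
Qed.

Variable L : nat.
Hypothesis L_gt0 : (0 < L)%N.
Hypothesis L_congr : forall w, ((q ^ (L * w))%:R - 1) / #|M|%:R \in pintegral p.

Let card_neq0 : #|M| != 0%N.
Proof. by rewrite -lt0n; apply/card_gt0P; exists 0. Qed.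

Let Theta_defect_polyOver := Theta_defect_polyOver p_pr qp L_congr.

Lemma act_Phi_shift c w m :
  act (Phi q c) (act (Phi q (2 * L * w)) m) = act (Phi q (2 * L * w + c)) m.
Proof.
set s := (2 * L * w)%N.
rewrite !PhiE -(act_mul m (compatible_Theta qp c) (compatible_Theta qp s)).
apply: (@act_congr _ _ (fun=> Theta q s * Theta_defect q #|M| c s)).
- by apply: compatibleM; apply: compatible_Theta.
- exact: compatible_Theta.
- by apply/compatible_const/rpredM; rewrite ?Theta_polyOver ?Theta_defect_polyOver.
- move=> n; rewrite (Theta_mul_defect _ _ _ card_neq0).
  by rewrite addrAC addrK subrr dvdp0.
Qed.

Lemma act_Phi_iter j m : act (Phi q (2 * L * j)) m = iter j (act (Phi q (2 * L))) m.
Proof.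
elim: j m => [|j IHj] m; first by rewrite muln0 PhiE Theta0 act_one.
by rewrite iterS -IHj act_Phi_shift mulnS addnC.
Qed.

Lemma exists_idempotent_Phi : exists2 k, (0 < k)%N &
  forall m, act (Phi q (2 * L * k)) (act (Phi q (2 * L * k)) m)
            = act (Phi q (2 * L * k)) m.
Proof.
have [k k_gt0 idem] := exists_idempotent_iter (act (Phi q (2 * L))).
by exists k => // m; rewrite !act_Phi_iter.
Qed.

Lemma act_Phi_series t m : (0 < t)%N ->
  act (Phi q (2 * L * t)) (act (Alim q (Theta_series q (2 * L * t))) m) + m
  = act (Alim q (Theta_series q (2 * L * t))) m.
Proof.
set c := (2 * L * t)%N => t_gt0.
have c_gt0 : (0 < c)%N by rewrite !muln_gt0 L_gt0 t_gt0.
have S_compat : compatible p q (Theta_series q c).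
  apply: (compatible_sum (F := fun j => Theta q (c * j))) => [j|n].
    exact: Theta_polyOver.
  by rewrite Theta_dvd //; nia.
have D_compat : compatible p q (Theta_defect_series q #|M| c).
  pose H j := Theta q (c * j) * Theta_defect q #|M| c (c * j).
  apply: (compatible_sum (F := H)) => [j|n].
    by rewrite rpredM ?Theta_polyOver // -[(c * j)%N]mulnA Theta_defect_polyOver.
  by rewrite dvdp_mulr ?Theta_dvd //; nia.
have TS_compat := compatibleM (compatible_Theta qp c) S_compat.
have one_compat : compatible p q (fun=> 1) by apply/compatible_const/rpred1.
have G_congr n : Theta q n %| Theta q c * Theta_series q c n + 1
    - Theta_series q c n - Theta_defect_series q #|M| c n *+ #|M|.
  by rewrite (Theta_series_mul _ _ _ card_neq0) Theta_dvd //; nia.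
have G_compat := compatibleD TS_compat one_compat.
rewrite -[in RHS](act_congr G_compat S_compat D_compat G_congr m).
by rewrite act_add // act_one act_mul //; apply: compatible_Theta.
Qed.

Lemma exists_Phi_annihilator : exists n, forall m, act (Phi q n) m = 0.
Proof.
have [k k_gt0 Phi_idem] := exists_idempotent_Phi.
exists (2 * L * k)%N.
exact: idempotent_eq0 (act_Phi_add _) Phi_idem (fun m => act_Phi_series m k_gt0).
Qed.

End FiniteModule.

Theorem proposition3p5 (p q : nat) (hp : prime p) (hodd : odd p)
  (hq : primitive_mod (p ^ 2) q)
  (M : finZmodType) (act : (nat -> {poly rat}) -> M -> M)
  (hM : isAmodule p q act) :
  exists n : nat, forall m : M, act (Phi q n) m = 0.
Proof.
have qp : coprime q p by case/andP: hq; rewrite (@coprime_pexpr 2).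
have card_gt0 : (0 < #|M|)%N by apply/card_gt0P; exists 0.
have [L L_gt0 L_congr] := pintegral_dvd_expn_sub1 hp qp card_gt0.
exact: (exists_Phi_annihilator hp qp hM L_gt0 L_congr).
Qed.
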